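(* Let $(p_k)_{k\in\mathbb N}$ be a probability distribution on $\mathbb N$ with $p_k>0$ for infinitely many $k$, let $\rho(t):=\#\{k\in\mathbb N:p_k\ge t^{-1}\}$ for $t>0$, and let $g$ be a function slowly varying at $\infty$. The following are equivalent: (a) $\sum_{k\ge1}p_k\mathbf 1_{\{p_k\le t\}}\sim t\,g(1/t)$ as $t\to0+$; (b) for all $\lambda>0$, $\lim_{t\to\infty}\frac{\rho(\lambda t)-\rho(t)}{g(t)}=\log\lambda$. *)

From HB Require Import structures.
From mathcomp Require Import all_boot all_order all_algebra.
From mathcomp Require Import all_classical all_reals all_analysis.
Set Implicit Arguments. Unset Strict Implicit. Unset Printing Implicit Defensive.
Import Order.TTheory GRing.Theory Num.Theory.
Import numFieldNormedType.Exports.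
Local Open Scope classical_set_scope.
Local Open Scope ring_scope.

Definition rsum1 {R : realType} (F : nat -> R) : R :=
  limn (fun n => \sum_(1 <= k < n) F k).

Definition prob_distr {R : realType} (p : nat -> R) : Prop :=
  (forall k, (1 <= k)%N -> 0 <= p k) /\
  ((fun n => \sum_(1 <= k < n) p k) @ \oo --> (1 : R)).

Definition inf_many_pos {R : realType} (p : nat -> R) : Prop :=
  forall N : nat, exists k : nat, (N < k)%N /\ 0 < p k.

(* rho(t) = #{k >= 1 : p_k >= t^{-1}}, as a real number (the count of a
   finite set, written as a series of indicators). *)
Definition rho {R : realType} (p : nat -> R) (t : R) : R :=
  rsum1 (fun k => (if t^-1 <= p k then 1 else 0)).

Definition trunc_mass {R : realType} (p : nat -> R) (t : R) : R :=
  rsum1 (fun k => (if p k <= t then p k else 0)).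

Definition slowly_varying {R : realType} (g : R -> R) : Prop :=
  (forall x : R, 0 < x -> 0 < g x) /\
  measurable_fun (`]0, +oo[ : set R) g /\
  (forall lam : R, 0 < lam ->
     (fun t => g (lam * t) / g t) @ +oo --> (1 : R)).

(* Let S(y) be y times the mass of the atoms p_k < 1/y.  The atoms counted by
   rho(lam y) - rho(y) are those with 1/(lam y) <= p_k < 1/y, whence
     S(y) - S(lam y) / lam  <=  rho(lam y) - rho(y)  <=  lam S(y) - S(lam y).
   Comparing the masses of {p_k <= t} and {p_k < t} shows that (a) means S(y) ~ g(y).
   If so, cutting [y, lam y] into n steps of ratio lam^(1/n) gives (b), since
   n (lam^(1/n) - 1) and n (1 - lam^(-1/n)) both tend to ln lam.  Conversely,
   iterating the inequalities along y, mu y, mu^2 y, ... expands S(y) as a geometric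
   series of increments of rho: finitely many terms give the lower bound, and (b)
   yields a Potter-type bound on the increments that sums the series from above. *)

From HB Require Import structures.
From mathcomp Require Import all_boot all_order all_algebra.
From mathcomp Require Import all_classical all_reals all_analysis.
From mathcomp Require Import ring lra.
Set Implicit Arguments. Unset Strict Implicit. Unset Printing Implicit Defensive.
Import Order.TTheory GRing.Theory Num.Theory.
Import numFieldNormedType.Exports.
Local Open Scope classical_set_scope.
Local Open Scope ring_scope.

Section real_limits.
Variable R : realType.

Lemma squeeze_cvgr_approx {T : Type} (F : set_system T) {FF : Filter F}
    (f : T -> R) (l : R) :
  (forall e, 0 < e -> exists (lo hi : T -> R) (l1 l2 : R),
     [/\ lo @ F --> l1, hi @ F --> l2, l - e <= l1, l2 <= l + e &
         \forall x \near F, lo x <= f x <= hi x]) ->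
  f @ F --> l.
Proof.
move=> sq; apply/cvgrPdist_le => e e0.
have e20 : 0 < e / 2 by rewrite divr_gt0.
have [lo [hi [l1 [l2 [lo_l1 hi_l2 le_l1 le_l2 lo_f_hi]]]]] := sq _ e20.
near=> x.
have /andP[lof fhi] : lo x <= f x <= hi x by near: x.
have : l1 - e / 2 < lo x by near: x; apply: (cvgr_gt _ lo_l1); lra.
have : hi x < l2 + e / 2 by near: x; apply: (cvgr_lt _ hi_l2); lra.
rewrite ler_distlC; lra.
Unshelve. all: by end_near. Qed.

Lemma cvg_near_le_mul {T : Type} (F : set_system T) {FF : Filter F}
    (f h : T -> R) (x th : R) :
  f @ F --> x -> h @ F --> x -> 0 < x -> 1 < th ->
  \forall t \near F, f t <= th * h t.
Proof.
move=> fx hx x0 th1; have th0 : 0 < th by lra.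
have mid : x < x * (1 + th) / 2 by rewrite ltr_pdivlMr //; nra.
have mid' : x * (1 + th) / 2 / th < x.
  by rewrite ltr_pdivrMr // ltr_pdivrMr //; nra.
near=> t.
have : f t < x * (1 + th) / 2 by near: t; exact: (cvgr_lt _ fx).
have : x * (1 + th) / 2 / th < h t by near: t; exact: (cvgr_gt _ hx).
rewrite ltr_pdivrMr // => ht ft; rewrite mulrC; exact/ltW/(lt_trans ft ht).
Unshelve. all: by end_near. Qed.

Lemma cvg_pinfty_scale (f : R -> R) (l c : R) : 0 < c ->
  f x @[x --> +oo] --> l -> f (c * x) @[x --> +oo] --> l.
Proof.
move=> c0 fl; apply: cvg_comp fl; apply/cvgryPge => A.
near=> x; rewrite -ler_pdivrMl //; near: x; exact: nbhs_pinfty_ge.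
Unshelve. all: by end_near. Qed.

Lemma near_at_right0_inv (P : R -> Prop) :
  (\forall x \near 0^'+, P x) <-> \forall y \near +oo, P y^-1.
Proof.
split.
- move=> /nbhs_ballP [d /= d0 Pd]; exists d^-1; split; first exact: num_real.
  move=> y dy; have y0 : 0 < y by apply: lt_trans dy; rewrite invr_gt0.
  apply: Pd; last by rewrite invr_gt0.
  rewrite /ball /= sub0r normrN gtr0_norm ?invr_gt0 //.
  by rewrite -(invrK d) ltf_pV2 ?posrE ?invr_gt0.
- move=> [M [_ PM]]; have M1 : 0 < Num.max M 1 by rewrite lt_max ltr01 orbT.
  apply/nbhs_ballP; exists (Num.max M 1)^-1 => /=; first by rewrite invr_gt0.
  move=> x; rewrite /ball /= sub0r normrN => xM x0; rewrite gtr0_norm // in xM.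
  rewrite -[x]invrK; apply: PM.
  have : Num.max M 1 < x^-1 by rewrite -(invrK (Num.max M 1)) ltf_pV2 ?posrE ?invr_gt0.
  by rewrite gt_max => /andP[].
Qed.

Lemma cvg_at_right0_inv (h : R -> R) (l : R) :
  h x @[x --> 0^'+] --> l <-> h x^-1 @[x --> +oo] --> l.
Proof.
by rewrite !cvgrPdist_le; split=> hl e /hl; rewrite near_at_right0_inv.
Qed.

Lemma cvg_sumr {T : Type} (F : set_system T) {FF : Filter F} n
    (f : 'I_n -> T -> R) (l : 'I_n -> R) :
  (forall j, f j @ F --> l j) -> (fun x => \sum_(j < n) f j x) @ F --> \sum_(j < n) l j.
Proof. by move=> fl; apply: cvg_big => //; exact: add_continuous. Qed.

Lemma near_pinfty_iter_le (f : R -> R) (mu th : R) : 1 <= mu -> 0 <= th ->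
  (\forall z \near +oo, f (mu * z) <= th * f z) ->
  \forall y \near +oo, forall j, f (mu ^+ j * y) <= th ^+ j * f y.
Proof.
move=> mu1 th0 [M [_ fM]]; exists (Num.max M 0); split; first exact: num_real.
move=> y; rewrite gt_max => /andP[My y0].
elim=> [|j IH]; first by rewrite !expr0 !mul1r.
have Mj : M < mu ^+ j * y.
  by apply: lt_le_trans My _; rewrite ler_peMl ?(ltW y0) // exprn_ege1.
rewrite exprS -mulrA; apply: le_trans (fM _ Mj) _.
by rewrite exprS -mulrA ler_wpM2l.
Qed.

Lemma exists_expr_lt (q eps : R) : 0 <= q < 1 -> 0 < eps -> exists J, q ^+ J < eps.
Proof.
move=> /andP[q0 q1] eps0; have q_lt1 : `|q| < 1 by rewrite ger0_norm.
have [J _ qJ] := cvgr0_norm_lt _ (cvg_expr q_lt1) _ eps0.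
by exists J; have := qJ J (leqnn J); rewrite ger0_norm ?exprn_ge0.
Qed.

End real_limits.

Lemma geometric_sum_mul1B (R : comRingType) (r : R) J :
  (1 - r) * \sum_(j < J) r ^+ j = 1 - r ^+ J.
Proof. by rewrite -[1 - r]opprB mulNr -subrX1 opprB. Qed.

Section exponential_bounds.
Variable R : realType.

Lemma expR_inv_ge1B (x : R) : 1 - x <= (expR x)^-1.
Proof. by rewrite -expRN; have := expR_ge1Dx (- x); lra. Qed.

Lemma expR_inv_mul1D_le1 (x : R) : (expR x)^-1 * (1 + x) <= 1.
Proof. by rewrite -ler_pdivlMl ?invr_gt0 ?expR_gt0 // invrK mulr1 expR_ge1Dx. Qed.

Lemma expR_step_bounds (L e : R) : 0 < L -> 0 < e ->
  exists n : nat, [/\ (0 < n)%N,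
    L - e <= n%:R * (1 - (expR (L / n%:R))^-1) &
    n%:R * (expR (L / n%:R) - 1) <= L + e].
Proof.
move=> L0 e0; have q0 : 0 <= 2 * L * L / e by rewrite divr_ge0 ?mulr_ge0 // ltW.
have [n bn] : exists n : nat, 2 * L * L / e + 2 * L < n%:R.
  by exists (Num.Def.archi_bound (2 * L * L / e + 2 * L)); apply: archi_boundP; lra.
have n0 : 0 < n%:R :> R by lra.
exists n; set x := L / n%:R; set mu := expR x.
have x0 : 0 < x by rewrite divr_gt0.
have nx : n%:R * x = L by rewrite mulrC divfK ?gt_eqF.
have x_le : 2 * x <= 1 by rewrite /x mulrA ler_pdivrMr // mul1r; lra.
have Lx_le : 2 * L * x <= e.
  have : 2 * L * L / e < n%:R by lra.
  by rewrite ltr_pdivrMr // /x mulrA ler_pdivrMr //; lra.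
have mu_ge : 1 + x <= mu := expR_ge1Dx x.
have nu_ge : 1 - x <= mu^-1 := expR_inv_ge1B x.
have mu0 : 0 < mu := expR_gt0 x.
have munu : mu * mu^-1 = 1 by rewrite mulfV ?gt_eqF.
have nu_le : mu^-1 * (1 + x) <= 1 := expR_inv_mul1D_le1 x.
clearbody mu x; split; first by rewrite -(ltr0n R).
- have nu_x : mu^-1 * x <= 1 - mu^-1 by lra.
  by have := ler_wpM2l (ltW n0) nu_x; rewrite mulrCA nx; nra.
- have mu_x : mu - 1 <= mu * x.
    by have := ler_wpM2l (ltW mu0) nu_ge; rewrite munu; lra.
  have mu2 : mu <= 2 by nra.
  by have := ler_wpM2l (ltW n0) mu_x; rewrite mulrCA nx; nra.
Qed.

Lemma expR_inv_geometric_sum_ge (x : R) J : 0 < x <= 1 -> (expR x)^-1 ^+ J <= x ->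
  1 - 2 * x <= (expR x)^-1 * \sum_(j < J) (expR x)^-1 ^+ j * x.
Proof.
move=> /andP[x0 x1] nuJ; set nu := (expR x)^-1.
have nu0 : 0 < nu by rewrite invr_gt0 expR_gt0.
have nu_ge : 1 - x <= nu := expR_inv_ge1B x.
have sum0 : 0 <= \sum_(j < J) nu ^+ j by apply: sumr_ge0 => j _; rewrite exprn_ge0 ?ltW.
rewrite -mulr_suml.
have : (1 - nu) * \sum_(j < J) nu ^+ j <= x * \sum_(j < J) nu ^+ j.
  by rewrite ler_wpM2r //; lra.
rewrite geometric_sum_mul1B => sum_ge; nra.
Qed.

Lemma expR_inv_mul1Dsqr_lt1 (x : R) : 0 < x < 1 -> (1 + x ^+ 2) * (expR x)^-1 < 1.
Proof.
move=> /andP[x0 x1]; have := expR_inv_mul1D_le1 x.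
have nu0 : 0 < (expR x)^-1 by rewrite invr_gt0 expR_gt0.
have : x ^+ 2 < x by rewrite expr2 gtr_pMl.
nra.
Qed.

Lemma expR_inv_mul1Dsqr_ratio_le (x : R) : 0 < x <= 1 / 3 ->
  x / (1 - (1 + x ^+ 2) * (expR x)^-1) <= 1 + 3 * x.
Proof.
move=> /andP[x0 x13]; have x1 : x < 1 by lra.
have d0 : 0 < 1 - (1 + x ^+ 2) * (expR x)^-1.
  by rewrite subr_gt0 expR_inv_mul1Dsqr_lt1 // x0.
have := expR_inv_mul1D_le1 x; set nu := (expR x)^-1 => nu_le.
rewrite ler_pdivrMr //.
have d_ge : x - x ^+ 2 <= (1 - (1 + x ^+ 2) * nu) * (1 + x).
  have : 0 <= 1 + x ^+ 2 by rewrite addr_ge0 ?sqr_ge0.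
  nra.
have : 0 <= x ^+ 2 * (1 - 3 * x) by rewrite mulr_ge0 ?sqr_ge0 //; lra.
rewrite expr2 in d_ge * => ? ; nra.
Qed.

End exponential_bounds.

Lemma sum_nat1_eventually0 (R : realType) (F : nat -> R) N n :
  (forall k, (N <= k)%N -> F k = 0) -> (N <= n)%N ->
  \sum_(1 <= k < n) F k = \sum_(1 <= k < N) F k.
Proof.
move=> F0 Nn; rewrite (big_nat_widen _ _ _ _ _ Nn) [RHS]big_mkcond /=.
by apply: eq_bigr => k _; case: ltnP => // /F0.
Qed.

Lemma rsum1_eventually0 (R : realType) (F : nat -> R) N :
  (forall k, (N <= k)%N -> F k = 0) -> rsum1 F = \sum_(1 <= k < N) F k.
Proof.
move=> F0; apply: lim_near_cst; first exact: norm_hausdorff.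
by exists N => // n /= Nn; rewrite (sum_nat1_eventually0 F0 Nn).
Qed.

Lemma exists_pos_lbound_prefix (R : realType) (f : nat -> R) n :
  exists2 t0 : R, 0 < t0 & forall k, (k < n)%N -> 0 < f k -> t0 <= f k.
Proof.
elim: n => [|n [t0 t00 ft0]]; first by exists 1.
have [fn0|fn_le0] := ltP 0 (f n).
- exists (Num.min t0 (f n)) => [|k]; first by rewrite lt_min t00 fn0.
  rewrite ltnS leq_eqVlt => /orP[/eqP -> _|kn fk]; first by rewrite ge_min lexx orbT.
  by rewrite ge_min ft0.
- exists t0 => // k; rewrite ltnS leq_eqVlt => /orP[/eqP -> fn|kn]; last exact: ft0.
  by move: fn_le0; rewrite leNgt fn.
Qed.

Lemma telescope_geometric (R : comRingType) (f : R -> R) (mu y : R) n :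
  f (mu ^+ n * y) - f y = \sum_(j < n) (f (mu * (mu ^+ j * y)) - f (mu ^+ j * y)).
Proof.
rewrite -[in f y](mul1r y) -(expr0 mu).
rewrite -(telescope_sumr (fun j => f (mu ^+ j * y)) (leq0n n)) big_mkord.
by apply: eq_bigr => j _; rewrite exprS mulrA.
Qed.

Section probability_distribution.
Variables (R : realType) (p : nat -> R).
Hypothesis p_distr : prob_distr p.

Let p_ge0 k : (1 <= k)%N -> 0 <= p k.
Proof. by case: p_distr => + _; exact. Qed.

Let partial_sums_cvg1 : (fun n => \sum_(1 <= k < n) p k) @ \oo --> (1 : R).
Proof. by case: p_distr. Qed.

Lemma prob_distr_eventually_lt a : 0 < a ->
  exists N, forall k, (N <= k)%N -> p k < a.
Proof.
move=> a0.
have p_cvg0 : (fun n => \sum_(1 <= k < n.+1) p k - \sum_(1 <= k < n) p k)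
    @ \oo --> (1 - 1 : R).
  apply: cvgB => //.
  by rewrite (cvg_shiftS (fun n => \sum_(1 <= k < n) p k)).
rewrite subrr in p_cvg0; have [N _ pN] := cvgr_lt _ p_cvg0 _ a0.
exists N.+1 => k Nk; have := pN k (ltnW Nk).
by rewrite big_nat_recr 1?(leq_trans _ Nk) //= addrAC subrr add0r.
Qed.

Lemma partial_sum_le1 n : \sum_(1 <= k < n) p k <= 1.
Proof.
have nd : nondecreasing_seq (fun n => \sum_(1 <= k < n) p k).
  apply/nondecreasing_seqP => -[|m]; first by rewrite !big_geq.
  by rewrite [leRHS]big_nat_recr //= lerDl p_ge0.
have := nondecreasing_cvgn_le nd (cvgP _ partial_sums_cvg1) n.
by rewrite (cvg_lim (@norm_hausdorff _ R^o) partial_sums_cvg1).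
Qed.

Definition heavy_mass (t : R) := rsum1 (fun k => if t <= p k then p k else 0).

Definition scaled_light_mass (y : R) := y * (1 - heavy_mass y^-1).

Lemma heavy_mass_sum t N : (forall k, (N <= k)%N -> p k < t) ->
  heavy_mass t = \sum_(1 <= k < N) (if t <= p k then p k else 0).
Proof. by move=> pN; apply: rsum1_eventually0 => k /pN; rewrite leNgt => ->. Qed.

Lemma rho_sum y N : (forall k, (N <= k)%N -> p k < y^-1) ->
  rho p y = \sum_(1 <= k < N) (if y^-1 <= p k then 1 else 0).
Proof. by move=> pN; apply: rsum1_eventually0 => k /pN; rewrite leNgt => ->. Qed.

Lemma trunc_mass_sum t N : (forall k, (N <= k)%N -> p k < t) ->
  trunc_mass p t = 1 - \sum_(1 <= k < N) (if t < p k then p k else 0).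
Proof.
move=> pN; apply: cvg_lim; first exact: norm_hausdorff.
have tail0 k : (N <= k)%N -> (if t < p k then p k else 0) = 0.
  by move/pN/ltW; rewrite ltNge => ->.
apply: cvg_trans (cvgB partial_sums_cvg1 (cvg_cst _)).
apply: near_eq_cvg; exists N => // n /= Nn.
rewrite fctE -(sum_nat1_eventually0 tail0 Nn) -sumrB; apply: eq_bigr => k _.
by case: leP; rewrite ?subr0 ?subrr.
Qed.

Lemma heavy_mass_le1 t : 0 < t -> heavy_mass t <= 1.
Proof.
move=> t0; have [N pN] := prob_distr_eventually_lt t0.
rewrite (heavy_mass_sum pN); apply: le_trans (partial_sum_le1 N).
rewrite big_nat [leRHS]big_nat; apply: ler_sum => k /andP[k1 _].
by case: ifP => // _; exact: p_ge0.
Qed.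

Lemma scaled_light_mass_ge0 y : 0 < y -> 0 <= scaled_light_mass y.
Proof.
by move=> y0; rewrite mulr_ge0 ?(ltW y0) // subr_ge0 heavy_mass_le1 // invr_gt0.
Qed.

Lemma trunc_mass_ge t : 0 < t -> 1 - heavy_mass t <= trunc_mass p t.
Proof.
move=> t0; have [N pN] := prob_distr_eventually_lt t0.
rewrite (trunc_mass_sum pN) (heavy_mass_sum pN) lerD2l lerN2.
apply: ler_sum => k _; case: (ltP t (p k)) => h; first by rewrite ifT // ltW.
by case: ifP => // /(le_trans (ltW t0)).
Qed.

Lemma trunc_mass_le t t' : 0 < t -> t < t' -> trunc_mass p t <= 1 - heavy_mass t'.
Proof.
move=> t0 tt'; have [N pN] := prob_distr_eventually_lt t0.
have pN' k (Nk : (N <= k)%N) := lt_trans (pN k Nk) tt'.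
rewrite (trunc_mass_sum pN) (heavy_mass_sum pN') lerD2l lerN2.
rewrite big_nat [leRHS]big_nat; apply: ler_sum => k /andP[k1 _].
case: (leP t' (p k)) => h; first by rewrite ifT //; exact: lt_le_trans tt' h.
by case: ifP => // _; exact: p_ge0.
Qed.

Lemma heavy_mass_near1 eta : 0 < eta -> exists2 t0 : R, 0 < t0 &
  forall t, 0 < t -> t <= t0 -> 1 - heavy_mass t <= eta.
Proof.
move=> eta0; have [K _ sumK] := cvgr_dist_le _ _ partial_sums_cvg1 _ eta0.
have {}sumK : 1 - eta <= \sum_(1 <= k < K.+1) p k.
  by have := sumK K.+1 (leqnSn K); rewrite ler_distlC => /andP[].
have [t0 t00 pt0] := exists_pos_lbound_prefix p K.+1.
exists t0 => // t t_gt0 tt0; have [N pN] := prob_distr_eventually_lt t_gt0.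
have pM k (Mk : (maxn N K.+1 <= k)%N) : p k < t.
  by apply: pN; apply: leq_trans Mk; exact: leq_maxl.
rewrite (heavy_mass_sum pM) (@big_cat_nat _ _ _ K.+1) ?leq_maxr //=.
suff : \sum_(1 <= k < K.+1) p k <=
    \sum_(1 <= k < K.+1) (if t <= p k then p k else 0).
  have : 0 <= \sum_(K.+1 <= k < maxn N K.+1) (if t <= p k then p k else 0).
    by apply: sumr_ge0 => k _; case: ifP => // /(le_trans (ltW t_gt0)).
  lra.
rewrite big_nat [leRHS]big_nat; apply: ler_sum => k /andP[k1 kK].
case: ifP => // /negbT; rewrite -ltNge => pt.
have := p_ge0 k1; rewrite le_eqVlt => /orP[/eqP <- //|pk0].
by have := pt0 k kK pk0; lra.
Qed.

Definition scaled_trunc_mass (y : R) := y * trunc_mass p y^-1.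

Lemma scaled_light_le_trunc y : 0 < y -> scaled_light_mass y <= scaled_trunc_mass y.
Proof. by move=> y0; rewrite ler_pM2l // trunc_mass_ge // invr_gt0. Qed.

Lemma scaled_trunc_le_light y c : 0 < y -> 1 < c ->
  scaled_trunc_mass y <= c * scaled_light_mass (c^-1 * y).
Proof.
move=> y0 c1; have c0 : 0 < c by apply: lt_trans c1.
rewrite /scaled_light_mass mulrA mulrA mulfV ?gt_eqF // mul1r ler_pM2l //.
apply: trunc_mass_le; first by rewrite invr_gt0.
by rewrite invfM invrK ltr_pMl ?invr_gt0.
Qed.

Local Notation increment mu y := (rho p (mu * y) - rho p y).

Definition in_band (y lam : R) k := ((lam * y)^-1 <= p k) && (p k < y^-1).

Section band.
Variables (y lam : R).
Hypotheses (y_gt0 : 0 < y) (lam_ge1 : 1 <= lam).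

Let lam_gt0 : 0 < lam. Proof. by apply: lt_le_trans lam_ge1. Qed.

Let inv_lam_y_le : (lam * y)^-1 <= y^-1.
Proof. by rewrite lef_pV2 ?posrE ?mulr_gt0 // ler_peMl // ltW. Qed.

Let threshold : exists N, forall k, (N <= k)%N -> p k < (lam * y)^-1.
Proof. by apply: prob_distr_eventually_lt; rewrite invr_gt0 mulr_gt0. Qed.

Lemma rho_increment_band N : (forall k, (N <= k)%N -> p k < (lam * y)^-1) ->
  increment lam y = \sum_(1 <= k < N) (in_band y lam k)%:R.
Proof.
move=> pN; have pN' k (Nk : (N <= k)%N) := lt_le_trans (pN k Nk) inv_lam_y_le.
rewrite (rho_sum pN) (rho_sum pN') -sumrB; apply: eq_bigr => k _.
rewrite /in_band; case: (leP y^-1 (p k)) => h2; case: leP => h1 //=;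
  rewrite ?subrr ?subr0 //.
by have := lt_le_trans h1 inv_lam_y_le; rewrite ltNge h2.
Qed.

Lemma scaled_light_increment_band N : (forall k, (N <= k)%N -> p k < (lam * y)^-1) ->
  scaled_light_mass y - scaled_light_mass (lam * y) / lam =
  y * \sum_(1 <= k < N) (in_band y lam k)%:R * p k.
Proof.
move=> pN; have pN' k (Nk : (N <= k)%N) := lt_le_trans (pN k Nk) inv_lam_y_le.
have -> : scaled_light_mass y - scaled_light_mass (lam * y) / lam =
    y * (heavy_mass (lam * y)^-1 - heavy_mass y^-1).
  by rewrite /scaled_light_mass; field; rewrite gt_eqF.
rewrite (heavy_mass_sum pN) (heavy_mass_sum pN') -sumrB; congr (_ * _).
apply: eq_bigr => k _; rewrite /in_band.
case: (leP y^-1 (p k)) => h2; case: leP => h1 //=;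
  rewrite ?subrr ?subr0 ?mul1r ?mul0r //.
by have := lt_le_trans h1 inv_lam_y_le; rewrite ltNge h2.
Qed.

Lemma rho_increment_ge0 : 0 <= increment lam y.
Proof.
have [N pN] := threshold; rewrite (rho_increment_band pN).
by apply: sumr_ge0 => k _; rewrite ler0n.
Qed.

Lemma scaled_light_increment_le_rho_increment :
  scaled_light_mass y - scaled_light_mass (lam * y) / lam <=
  increment lam y.
Proof.
have [N pN] := threshold.
rewrite (rho_increment_band pN) (scaled_light_increment_band pN) big_distrr /=.
apply: ler_sum => k _; rewrite /in_band; case: andP => [[_ pk]|_] /=.
  by rewrite mul1r -(mulfV (lt0r_neq0 y_gt0)) ler_pM2l // ltW.
by rewrite mul0r mulr0.
Qed.

Lemma rho_increment_le_scaled_light_increment :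
  increment lam y <= lam * scaled_light_mass y - scaled_light_mass (lam * y).
Proof.
have [N pN] := threshold.
have -> : lam * scaled_light_mass y - scaled_light_mass (lam * y) =
    lam * (scaled_light_mass y - scaled_light_mass (lam * y) / lam).
  by field; rewrite gt_eqF.
rewrite (rho_increment_band pN) (scaled_light_increment_band pN) mulrA big_distrr /=.
apply: ler_sum => k _; rewrite /in_band; case: andP => [[pk _]|_] /=.
  by rewrite mul1r -(mulfV (lt0r_neq0 (mulr_gt0 lam_gt0 y_gt0))) ler_pM2l ?mulr_gt0.
by rewrite mul0r mulr0.
Qed.

End band.


Lemma rho_pow_increment_le y mu n : 0 < y -> 1 <= mu ->
  rho p (mu ^+ n * y) - rho p y <=
  \sum_(j < n) (mu * scaled_light_mass (mu ^+ j * y) - scaled_light_mass (mu ^+ j.+1 * y)).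
Proof.
move=> y0 mu1; rewrite telescope_geometric; apply: ler_sum => j _.
rewrite exprS -mulrA; apply: rho_increment_le_scaled_light_increment => //.
by rewrite mulr_gt0 // exprn_gt0 // (lt_le_trans ltr01 mu1).
Qed.

Lemma rho_pow_increment_ge y mu n : 0 < y -> 1 <= mu ->
  \sum_(j < n) (scaled_light_mass (mu ^+ j * y) - scaled_light_mass (mu ^+ j.+1 * y) / mu)
  <= rho p (mu ^+ n * y) - rho p y.
Proof.
move=> y0 mu1; rewrite telescope_geometric; apply: ler_sum => j _.
rewrite exprS -mulrA; apply: scaled_light_increment_le_rho_increment => //.
by rewrite mulr_gt0 // exprn_gt0 // (lt_le_trans ltr01 mu1).
Qed.

Section light_mass_series.
Variables (y mu : R).
Hypotheses (y_gt0 : 0 < y) (mu_ge1 : 1 <= mu).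

Let mu_gt0 : 0 < mu. Proof. exact: lt_le_trans ltr01 mu_ge1. Qed.

Let pow_y_gt0 j : 0 < mu ^+ j * y. Proof. by rewrite mulr_gt0 // exprn_gt0. Qed.

Let pow_mu_y j : mu ^+ j.+1 * y = mu * (mu ^+ j * y).
Proof. by rewrite exprS mulrA. Qed.

Lemma scaled_light_le_increment_series J :
  scaled_light_mass y <= \sum_(j < J) mu^-1 ^+ j * increment mu (mu ^+ j * y)
                         + mu^-1 ^+ J * scaled_light_mass (mu ^+ J * y).
Proof.
elim: J => [|J IH]; first by rewrite big_ord0 !expr0 add0r !mul1r.
apply: le_trans IH _; rewrite big_ord_recr /= -addrA lerD2l exprSr -mulrA -mulrDr.
rewrite ler_wpM2l ?exprn_ge0 ?invr_ge0 ?(ltW mu_gt0) // pow_mu_y [mu^-1 * _]mulrC.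
have := scaled_light_increment_le_rho_increment (pow_y_gt0 J) mu_ge1; lra.
Qed.

Lemma scaled_light_ge_increment_series J :
  mu^-1 * \sum_(j < J) mu^-1 ^+ j * increment mu (mu ^+ j * y)
  + mu^-1 ^+ J * scaled_light_mass (mu ^+ J * y) <= scaled_light_mass y.
Proof.
elim: J => [|J IH]; first by rewrite big_ord0 mulr0 !expr0 add0r !mul1r.
apply: le_trans IH; rewrite big_ord_recr /= mulrDr -addrA lerD2l.
rewrite exprSr -!mulrA [mu^-1 * (_ * _)]mulrCA -mulrDr.
rewrite ler_wpM2l ?exprn_ge0 ?invr_ge0 ?(ltW mu_gt0) // pow_mu_y -mulrDr.
rewrite ler_pdivrMl //.
have := rho_increment_le_scaled_light_increment (pow_y_gt0 J) mu_ge1; lra.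
Qed.

End light_mass_series.

Lemma scaled_light_tail_small y mu eta : 0 < y -> 1 < mu -> 0 < eta ->
  exists J, mu^-1 ^+ J * scaled_light_mass (mu ^+ J * y) <= eta.
Proof.
move=> y0 mu1 eta0; have mu0 : 0 < mu by apply: lt_trans mu1.
have [t0 t00 heavy_t0] := heavy_mass_near1 (divr_gt0 eta0 y0).
have [J nuJ] : exists J, mu^-1 ^+ J < t0 * y.
  by apply: exists_expr_lt; rewrite ?mulr_gt0 // invr_ge0 (ltW mu0) invf_lt1.
exists J.
have -> : mu^-1 ^+ J * scaled_light_mass (mu ^+ J * y) =
    y * (1 - heavy_mass (mu^-1 ^+ J / y)).
  rewrite /scaled_light_mass invfM -exprVn !mulrA -exprMn mulVf ?gt_eqF //.
  by rewrite expr1n mul1r.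
rewrite mulrC -ler_pdivlMr // heavy_t0 ?divr_gt0 ?exprn_gt0 ?invr_gt0 //.
by rewrite ler_pdivrMr // ltW.
Qed.

Lemma scaled_light_le_increment_div y mu r : 0 < y -> 1 < mu -> 0 <= r < 1 ->
  (forall j, mu^-1 ^+ j * increment mu (mu ^+ j * y) <= r ^+ j * increment mu y) ->
  scaled_light_mass y <= increment mu y / (1 - r).
Proof.
move=> y0 mu1 /andP[r0 r1] pow_bound; apply/ler_addgt0Pr => eta eta0.
have [J tailJ] := scaled_light_tail_small y0 mu1 eta0.
apply: le_trans (scaled_light_le_increment_series y0 (ltW mu1) J) _; apply: lerD tailJ.
apply: (le_trans (ler_sum _ (fun (j : 'I_J) _ => pow_bound j))).
rewrite -mulr_suml mulrC ler_wpM2l ?rho_increment_ge0 ?(ltW mu1) //.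
have r1' : 0 < 1 - r by rewrite subr_gt0.
by rewrite -(ler_pM2l r1') mulfV ?gt_eqF // geometric_sum_mul1B lerBlDr lerDl exprn_ge0.
Qed.

End probability_distribution.

Section slowly_varying_scale.
Variables (R : realType) (g : R -> R).
Hypothesis g_gt0 : forall x, 0 < x -> 0 < g x.
Hypothesis g_ratio : forall lam, 0 < lam ->
  (fun t => g (lam * t) / g t) @ +oo --> (1 : R).

Lemma cvg_div_scale (F : R -> R) (l c : R) : 0 < c ->
  F y / g y @[y --> +oo] --> l -> F (c * y) / g y @[y --> +oo] --> l.
Proof.
move=> c0 Fl.
have prod_l : F (c * y) / g (c * y) * (g (c * y) / g y) @[y --> +oo] --> l * 1.
  by apply: cvgM; [exact: (cvg_pinfty_scale c0 Fl) | exact: g_ratio].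
rewrite mulr1 in prod_l; apply: (cvg_trans _ prod_l); apply: near_eq_cvg; near=> y.
have gcy : 0 < g (c * y).
  by apply/g_gt0/mulr_gt0 => //; near: y; exact: nbhs_pinfty_gt.
by rewrite /= mulrA divfK ?gt_eqF.
Unshelve. all: by end_near. Qed.

End slowly_varying_scale.

Section regular_variation.
Variables (R : realType) (p : nat -> R) (g : R -> R).
Hypothesis p_distr : prob_distr p.
Hypothesis g_gt0 : forall x, 0 < x -> 0 < g x.
Hypothesis g_ratio : forall lam, 0 < lam ->
  (fun t => g (lam * t) / g t) @ +oo --> (1 : R).

Local Notation S := (scaled_light_mass p).
Local Notation T := (scaled_trunc_mass p).
Local Notation increment mu y := (rho p (mu * y) - rho p y).

Let near_pinfty_gt0 : \forall y \near +oo, 0 < y :> R.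
Proof. exact: nbhs_pinfty_gt. Qed.

Let ler_divg a b y : 0 < y -> a <= b -> a / g y <= b / g y.
Proof. by move=> y0 ab; rewrite ler_pM2r // invr_gt0 g_gt0. Qed.

Lemma scaled_light_cvg_of_trunc :
  T y / g y @[y --> +oo] --> (1 : R) -> S y / g y @[y --> +oo] --> (1 : R).
Proof.
move=> T_cvg; apply: squeeze_cvgr_approx => e e0; have c1 : 1 < 1 + e by lra.
have c0 : 0 < 1 + e by lra.
exists (fun y => T ((1 + e) * y) / g y * (1 + e)^-1), (fun y => T y / g y).
exists (1 * (1 + e)^-1), 1; split => //.
- by apply: cvgM; [exact: cvg_div_scale | exact: cvg_cst].
- by rewrite mul1r -div1r ler_pdivlMr //; nra.
- lra.
near=> y; have y0 : 0 < y by near: y.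
apply/andP; split; last exact/ler_divg/scaled_light_le_trunc.
rewrite mulrAC; apply: ler_divg => //; rewrite ler_pdivrMr // [leRHS]mulrC.
have := scaled_trunc_le_light p_distr (mulr_gt0 c0 y0) c1.
by rewrite mulKf ?gt_eqF.
Unshelve. all: by end_near. Qed.

Lemma scaled_trunc_cvg_of_light :
  S y / g y @[y --> +oo] --> (1 : R) -> T y / g y @[y --> +oo] --> (1 : R).
Proof.
move=> S_cvg; apply: squeeze_cvgr_approx => e e0; have c1 : 1 < 1 + e by lra.
have c0 : 0 < 1 + e by lra.
exists (fun y => S y / g y), (fun y => (1 + e) * (S ((1 + e)^-1 * y) / g y)).
exists 1, ((1 + e) * 1); split => //.
- by apply: cvgM; [exact: cvg_cst | apply: cvg_div_scale; rewrite ?invr_gt0].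
- lra.
- lra.
near=> y; have y0 : 0 < y by near: y.
apply/andP; split; first exact/ler_divg/scaled_light_le_trunc.
by rewrite mulrA; apply/ler_divg/scaled_trunc_le_light.
Unshelve. all: by end_near. Qed.

Lemma rho_increment_cvg_gt1 lam : S y / g y @[y --> +oo] --> (1 : R) -> 1 < lam ->
  increment lam y / g y @[y --> +oo] --> ln lam.
Proof.
move=> S_cvg lam1; have L0 : 0 < ln lam := ln_gt0 lam1.
apply: squeeze_cvgr_approx => e e0.
(* n steps of ratio mu = lam^(1/n), each between 1 - 1/mu and mu - 1 in units of g *)
have [n [n0 lo_b hi_b]] := expR_step_bounds L0 e0.
set mu := expR (ln lam / n%:R) in lo_b hi_b.
have mu0 : 0 < mu := expR_gt0 _.
have mu1 : 1 <= mu.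
  have : 0 <= ln lam / n%:R by rewrite divr_ge0 ?ler0n ?(ltW L0).
  have : 1 + ln lam / n%:R <= mu := expR_ge1Dx _.
  lra.
have mu_n : mu ^+ n = lam.
  by rewrite /mu -expRM_natl mulrC divfK ?lnK ?posrE ?(lt_trans ltr01) // pnatr_eq0 -lt0n.
have S_pow_cvg j : S (mu ^+ j * y) / g y @[y --> +oo] --> (1 : R).
  by apply: cvg_div_scale => //; rewrite exprn_gt0.
exists (fun y => \sum_(j < n) (S (mu ^+ j * y) / g y - S (mu ^+ j.+1 * y) / g y / mu)),
  (fun y => \sum_(j < n) (mu * (S (mu ^+ j * y) / g y) - S (mu ^+ j.+1 * y) / g y)).
exists (\sum_(j < n) (1 - 1 / mu)), (\sum_(j < n) (mu * 1 - 1)); split.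
- by apply: cvg_sumr => j; apply: cvgB; [|apply: cvgM; [|exact: cvg_cst]].
- by apply: cvg_sumr => j; apply: cvgB; [apply: cvgM; [exact: cvg_cst|]|].
- by rewrite sumr_const card_ord -mulr_natl div1r.
- by rewrite sumr_const card_ord -mulr_natl mulr1.
near=> y; have y0 : 0 < y by near: y.
apply/andP; split.
- have := rho_pow_increment_ge p_distr n y0 mu1; rewrite mu_n => /(ler_divg y0).
  apply: le_trans; rewrite mulr_suml; apply: ler_sum => j _.
  by rewrite mulrBl [_ / mu / _]mulrAC.
- have := rho_pow_increment_le p_distr n y0 mu1; rewrite mu_n => /(ler_divg y0).
  move=> incr_le; apply: le_trans incr_le _; rewrite mulr_suml.
  by apply: ler_sum => j _; rewrite mulrBl mulrA.
Unshelve. all: by end_near. Qed.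

Lemma rho_increment_cvg lam : S y / g y @[y --> +oo] --> (1 : R) -> 0 < lam ->
  increment lam y / g y @[y --> +oo] --> ln lam.
Proof.
move=> S_cvg lam0; case: (ltgtP lam 1) => [lam_lt1|lam_gt1|->].
- have inv_gt1 : 1 < lam^-1 by rewrite invf_gt1.
  have incr_cvg : - (increment lam^-1 (lam * y) / g y)
      @[y --> +oo] --> - ln lam^-1.
    have := rho_increment_cvg_gt1 S_cvg inv_gt1.
    by move/(cvg_div_scale g_gt0 g_ratio lam0); apply: cvgN.
  rewrite lnV ?posrE // opprK in incr_cvg; apply: (cvg_trans _ incr_cvg).
  apply: near_eq_cvg; apply: nearW => y /=.
  by rewrite mulrA mulVf ?gt_eqF // mul1r -mulNr opprB.
- exact: rho_increment_cvg_gt1.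
- by rewrite ln1; under eq_cvg do rewrite mul1r subrr mul0r; exact: cvg_cst.
Qed.

Lemma scaled_light_le_increment_near (mu x th : R) : 1 < mu -> 0 < x -> 1 < th -> th < mu ->
  increment mu y / g y @[y --> +oo] --> x ->
  \forall y \near +oo, S y <= increment mu y / (1 - th / mu).
Proof.
move=> mu1 x0 th1 th_mu incr_cvg; have mu0 : 0 < mu by apply: lt_trans mu1.
have th0 : 0 < th by apply: lt_trans th1.
have incr_mu_cvg := cvg_div_scale g_gt0 g_ratio mu0 incr_cvg.
have step : \forall z \near +oo,
    increment mu (mu * z) <= th * increment mu z.
  near=> z; have z0 : 0 < z by near: z.
  have : increment mu (mu * z) / g z <=
      th * (increment mu z / g z).
    by near: z; exact: cvg_near_le_mul incr_mu_cvg incr_cvg x0 th1.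
  by rewrite [th * _]mulrA ler_pM2r // invr_gt0 g_gt0.
have := near_pinfty_iter_le (f := fun z => increment mu z) (ltW mu1) (ltW th0) step.
apply: filterS2 near_pinfty_gt0 => y y0 /= pow_le.
apply: scaled_light_le_increment_div => //.
  by rewrite divr_ge0 ?(ltW th0) ?(ltW mu0) //= ltr_pdivrMr // mul1r.
move=> j; rewrite exprMn [th ^+ j * _]mulrC -mulrA.
by rewrite ler_wpM2l ?exprn_ge0 ?invr_ge0 ?(ltW mu0).
Unshelve. all: by end_near. Qed.

Lemma scaled_light_cvg_of_rho_increment :
  (forall lam, 0 < lam -> increment lam y / g y @[y --> +oo] --> ln lam) ->
  S y / g y @[y --> +oo] --> (1 : R).
Proof.
move=> rho_cvg; apply: squeeze_cvgr_approx => e e0.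
(* steps of ratio mu = e^x, and th = 1 + x^2 < mu keeps x / (1 - th / mu) = 1 + O(x) *)
set x := Num.min e 1 / 3.
have x0 : 0 < x by rewrite divr_gt0 // lt_min e0 ltr01.
have xe : 3 * x <= e by rewrite /x mulrC divfK // ge_min lexx.
have x1 : x <= 1 / 3 by rewrite /x ler_pM2r ?invr_gt0 // ge_min lexx orbT.
set mu := expR x; have mu1 : 1 < mu by have := expR_ge1Dx x; rewrite -/mu; lra.
have mu0 : 0 < mu by apply: lt_trans mu1.
set th := 1 + x ^+ 2; have th1 : 1 < th by rewrite /th ltrDl exprn_gt0.
have th_mu : th < mu.
  by rewrite -[ltRHS]mul1r -ltr_pdivrMr //; apply: expR_inv_mul1Dsqr_lt1; rewrite x0; lra.
have incr_cvg : increment mu y / g y @[y --> +oo] --> x.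
  by have := rho_cvg mu mu0; rewrite expRK.
have [J /ltW nuJ] : exists J, mu^-1 ^+ J < x.
  by apply: exists_expr_lt x0; rewrite invr_ge0 (ltW mu0) invf_lt1.
exists (fun y => mu^-1 * \sum_(j < J) mu^-1 ^+ j *
                   (increment mu (mu ^+ j * y) / g y)),
  (fun y => increment mu y / g y / (1 - th / mu)).
exists (mu^-1 * \sum_(j < J) mu^-1 ^+ j * x), (x / (1 - th / mu)); split.
- apply: cvgM; first exact: cvg_cst.
  apply: cvg_sumr => j; apply: cvgM; first exact: cvg_cst.
  by apply: (cvg_div_scale g_gt0 g_ratio _ incr_cvg); rewrite exprn_gt0.
- by apply: cvgM; [exact: incr_cvg | exact: cvg_cst].
- by have := expR_inv_geometric_sum_ge (_ : 0 < x <= 1) nuJ; rewrite x0; lra.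
- by have := expR_inv_mul1Dsqr_ratio_le (_ : 0 < x <= 1 / 3); rewrite x0 x1; lra.
near=> y; have y0 : 0 < y by near: y.
apply/andP; split.
- have tail0 : 0 <= mu^-1 ^+ J * S (mu ^+ J * y).
    rewrite mulr_ge0 ?exprn_ge0 ?invr_ge0 ?(ltW mu0) // scaled_light_mass_ge0 //.
    by rewrite mulr_gt0 // exprn_gt0.
  have series_le : mu^-1 * \sum_(j < J) mu^-1 ^+ j * increment mu (mu ^+ j * y) <= S y.
    by have := scaled_light_ge_increment_series p_distr y0 (ltW mu1) J; lra.
  apply: le_trans (ler_divg y0 series_le); rewrite -mulrA ler_pM2l ?invr_gt0 //.
  by rewrite mulr_suml; apply: ler_sum => j _; rewrite [leLHS]mulrA.
- rewrite [_ / g y / _]mulrAC; apply: ler_divg => //.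
  by near: y; exact: scaled_light_le_increment_near incr_cvg.
Unshelve. all: by end_near. Qed.

End regular_variation.

Theorem lemma2p3 (R : realType) (p : nat -> R) (g : R -> R) :
  prob_distr p -> inf_many_pos p -> slowly_varying g ->
  ((fun t => trunc_mass p t / (t * g t^-1)) @ 0^'+ --> (1 : R)
   <->
   (forall lam : R, 0 < lam ->
      (fun t => (rho p (lam * t) - rho p t) / g t) @ +oo --> ln lam)).
Proof.
move=> p_distr _ [g_gt0 [_ g_ratio]].
have trunc_eq : (fun y => trunc_mass p y^-1 / (y^-1 * g y^-1^-1)) =
    (fun y => scaled_trunc_mass p y / g y).
  by apply/funext => y; rewrite invrK invfM invrK mulrA [_ * y]mulrC.
rewrite cvg_at_right0_inv trunc_eq; split.
- move/(scaled_light_cvg_of_trunc p_distr g_gt0 g_ratio) => S_cvg lam.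
  exact: rho_increment_cvg.
- move=> rho_cvg; apply: scaled_trunc_cvg_of_light => //.
  exact: scaled_light_cvg_of_rho_increment.
Qed.
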